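(* For all integers $n \geq 1$ and $i \geq 1$, the number of partitions of $n$ whose smallest part is exactly $i$ equals $$\sum_{s=1}^{i} (-1)^{s-1} \sum_{\pi \in U_{s,i}} p(n - |\pi|).$$
   Context: $p(m)$ is the number of partitions of $m$, with $p(0)=1$ and $p(m)=0$ for $m<0$. $U_{s,i}$ denotes the set of partitions into exactly $s$ distinct parts whose largest part equals $i$, and $|\pi|$ denotes the sum of the parts of $\pi$. *)

From mathcomp Require Import all_boot all_order all_algebra.
Set Implicit Arguments. Unset Strict Implicit. Unset Printing Implicit Defensive.
Import GRing.Theory Num.Theory.

Definition is_partition (n : nat) (l : seq nat) : bool :=
  [&& all (fun x => 0 < x) l, sorted geq l & sumn l == n].

(* Partitions of n (every partition of n has at most n parts, each <= n),
   enumerated as k-tuples of 'I_(n+1) for k <= n. *)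
Definition partitions_of (n : nat) : seq (seq nat) :=
  flatten [seq [seq l <- [seq map val (tval t) | t <- enum {: k.-tuple 'I_n.+1}]
                      | is_partition n l]
          | k <- iota 0 n.+1].

Definition npart (m : int) : nat :=
  match m with
  | Posz k => size (partitions_of k)
  | Negz _ => 0
  end.

(* smallest part of a nonempty partition (last part, as parts are nonincreasing) *)
Definition smallest_part (l : seq nat) : nat := last 0 l.

(* U_{s,i}: partitions into exactly s distinct parts with largest part i,
   listed as strictly decreasing s-tuples of parts in 'I_(i+1). *)
Definition U (s i : nat) : seq (seq nat) :=
  [seq l <- [seq map val (tval t) | t <- enum {: s.-tuple 'I_i.+1}]
     | [&& all (fun x => 0 < x) l, sorted gtn l & head 0 l == i]].

From mathcomp Require Import all_boot all_order all_algebra.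
From mathcomp Require Import zify.
Import GRing.Theory Num.Theory.
Set Implicit Arguments. Unset Strict Implicit.

(* Let q(N, m) count the partitions of N into parts >= m.  Removing the
   smallest part shows that the partitions of n with smallest part i are
   counted by q(n - i, i), and sorting partitions by whether m is a part gives
   q(N, m) = q(N, m + 1) + q(N - m, m).  Unfolding q(N, j + 1) = q(N, j) -
   q(N - j, j) down to q(N, 1) = p(N) yields the sum of (-1)^|S| p(N - |S|)
   over the sets S of distinct parts in {1, ..., j}; for j = i - 1 and
   N = n - i, adjoining the part i to S turns this into the sum over the
   U_{s,i}. *)

Lemma mem_tuple_seqs k N l :
  (l \in [seq map val (tval t) | t <- enum {: k.-tuple 'I_N.+1}]) =
  (size l == k) && all (fun x => x <= N) l.
Proof.
apply/mapP/idP => [[t _ ->] | /andP [/eqP size_l /allP l_le]].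
  rewrite size_map size_tuple eqxx /=.
  by apply/allP => _ /mapP [x _ ->]; rewrite -ltnS.
have size_l' : size (map (fun x => inord x : 'I_N.+1) l) == k.
  by rewrite size_map size_l.
exists (Tuple size_l'); first by rewrite mem_enum.
by rewrite /= -map_comp map_id_in // => x /l_le x_le /=; rewrite inordK.
Qed.

Lemma uniq_tuple_seqs k N :
  uniq [seq map val (tval t) | t <- enum {: k.-tuple 'I_N.+1}].
Proof. by rewrite map_inj_uniq ?enum_uniq // => t1 t2 /(inj_map val_inj)/val_inj. Qed.

Lemma leq_sumn_mem (s : seq nat) x : x \in s -> x <= sumn s.
Proof. by elim: s => //= y s IH; rewrite in_cons => /orP [/eqP -> | /IH]; lia. Qed.

Lemma is_partition_bounded n l :
  is_partition n l -> (size l <= n) && all (fun x => x <= n) l.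
Proof.
case/and3P => l_pos _ /eqP <-; apply/andP; split.
  by elim: l l_pos => //= x l IH /andP [x_pos /IH]; lia.
by apply/allP => x /leq_sumn_mem.
Qed.

Lemma mem_partitions_of n l : (l \in partitions_of n) = is_partition n l.
Proof.
apply/flatten_mapP/idP => [[k _] | l_part]; first by rewrite mem_filter => /andP [].
have /andP [size_l l_le] := is_partition_bounded l_part.
exists (size l); first by rewrite mem_iota add0n ltnS.
by rewrite mem_filter l_part mem_tuple_seqs eqxx.
Qed.

Lemma uniq_partitions_of n : uniq (partitions_of n).
Proof.
rewrite /partitions_of; elim: (iota 0 n.+1) (iota_uniq 0 n.+1) => //= k ks IH.
case/andP => k_notin ks_uniq; rewrite cat_uniq IH // filter_uniq ?uniq_tuple_seqs //=.
rewrite andbT; apply/hasPn => l /flatten_mapP [k' k'_in].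
rewrite !mem_filter !mem_tuple_seqs => /andP [_ /andP [/eqP size_l _]].
by apply/negP => /and3P [_ /eqP k_eq _]; rewrite -k_eq size_l k'_in in k_notin.
Qed.

Lemma size_bij_in (T1 T2 : eqType) (A : seq T1) (B : seq T2) (f : T1 -> T2) :
  uniq A -> uniq B -> {in A &, injective f} -> {in A, forall x, f x \in B} ->
  {in B, forall y, exists2 x, x \in A & y = f x} -> size A = size B.
Proof.
move=> A_uniq B_uniq f_inj f_AB f_onto; rewrite -(size_map f); apply: perm_size.
apply: uniq_perm => //; first by rewrite map_inj_in_uniq.
move=> y; apply/mapP/idP => [[x x_in ->] | /f_onto [x x_in ->]]; first exact: f_AB.
by exists x.
Qed.

Lemma count_predI_predC (T : Type) (a b : pred T) s :
  count a s = count (predI a b) s + count (predI a (predC b)) s.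
Proof. by elim: s => //= x s ->; case: (a x); case: (b x) => /=; lia. Qed.

Lemma sorted_geq_rcons s x : sorted geq (rcons s x) = sorted geq s && all (leq x) s.
Proof.
case: s => //= y s; elim: s y => [|z s IH] y /=; first by rewrite andbT.
rewrite IH /=; case: (leqP z y) => //= z_le_y.
by case: (leqP x z) => x_le_z; rewrite ?(leq_trans x_le_z z_le_y) ?andbF.
Qed.

Lemma sorted_geq_rcons_min s x : sorted geq (rcons s x) -> all (leq x) (rcons s x).
Proof. by rewrite sorted_geq_rcons all_rcons leqnn => /andP []. Qed.

Lemma all_leqS m l : all (leq m.+1) l = all (leq m) l && (m \notin l).
Proof.
elim: l => //= x l ->; rewrite in_cons negb_or ltn_neqAle.
by case: (m == x); case: (m <= x); case: (all _ l); case: (m \in l).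
Qed.

Lemma smallest_partE n i l : 0 < i -> is_partition n l ->
  (smallest_part l == i) = all (leq i) l && (i \in l).
Proof.
move=> i_gt0 /and3P [_ l_sorted _]; case/lastP: l l_sorted => [|s x] l_sorted.
  by rewrite andbF; case: i i_gt0.
have /allP x_min := sorted_geq_rcons_min l_sorted.
rewrite /smallest_part last_rcons; apply/eqP/andP => [<- | [/allP i_le i_in]].
  by rewrite mem_rcons mem_head; split => //; apply/allP.
by apply/eqP; rewrite eqn_leq x_min // i_le // mem_rcons mem_head.
Qed.

Local Open Scope ring_scope.

Definition npart_ge (N : int) (m : nat) : nat :=
  if N is Posz k then size [seq l <- partitions_of k | all (leq m) l] else 0.

Lemma npart_ge_neg N m : N < 0 -> npart_ge N m = 0%N.
Proof. by case: N. Qed.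

Lemma npart_ge1 N : npart_ge N 1 = npart N.
Proof.
case: N => [k|] //=; rewrite (eq_in_filter (a2 := predT)) ?filter_predT //.
by move=> l; rewrite mem_partitions_of => /and3P [].
Qed.

Lemma npart_ge_smallest N m : (0 < m)%N ->
  size [seq l <- partitions_of N | all (leq m) l && (m \in l)] =
  npart_ge (N%:Z - m%:Z) m.
Proof.
move=> m_gt0; case: (leqP m N) => [m_le | N_lt]; last first.
  rewrite npart_ge_neg; last by lia.
  apply/eqP; rewrite size_filter -leqn0 leqNgt -has_count; apply/hasPn => l.
  rewrite mem_partitions_of => /and3P [_ _ /eqP l_sum].
  by apply/negP => /andP [_ /leq_sumn_mem]; lia.
rewrite subzn //=; symmetry; apply: (size_bij_in (f := rcons^~ m)).
- by rewrite filter_uniq ?uniq_partitions_of.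
- by rewrite filter_uniq ?uniq_partitions_of.
- by move=> l1 l2 _ _; apply: rcons_injl.
- move=> l; rewrite !mem_filter !mem_partitions_of.
  case/andP => l_ge /and3P [l_pos l_sorted /eqP l_sum].
  rewrite all_rcons l_ge mem_rcons mem_head leqnn /is_partition all_rcons l_pos m_gt0.
  by rewrite sumn_rcons l_sum subnK // eqxx sorted_geq_rcons l_sorted l_ge.
- move=> l; rewrite mem_filter mem_partitions_of.
  case/lastP: l => [|s x] //.
  case/andP => /andP [l_ge m_in] /and3P [l_pos l_sorted /eqP l_sum].
  have x_eq : x = m.
    have /allP x_min := sorted_geq_rcons_min l_sorted.
    by apply/eqP; rewrite eqn_leq x_min // (allP l_ge) // mem_rcons mem_head.
  move: l_ge l_pos l_sum; rewrite x_eq !all_rcons sumn_rcons.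
  move=> /andP [_ s_ge] /andP [_ s_pos] s_sum.
  exists s => //; rewrite mem_filter mem_partitions_of s_ge /is_partition s_pos.
  rewrite -s_sum addnK eqxx andbT.
  by move: l_sorted; rewrite sorted_geq_rcons => /andP [].
Qed.

Lemma npart_ge_rec N m : (0 < m)%N ->
  npart_ge N m = (npart_ge N m.+1 + npart_ge (N - m%:Z) m)%N.
Proof.
move=> m_gt0; case: N => [k|k]; last by rewrite !npart_ge_neg //; lia.
rewrite /= -npart_ge_smallest // !size_filter (count_predI_predC _ (fun l => m \in l)).
by rewrite addnC; congr (_ + _)%N; apply: eq_count => l /=; rewrite all_leqS.
Qed.

Fixpoint subsets_upto (m : nat) : seq (seq nat) :=
  if m is m'.+1 then subsets_upto m' ++ map (cons m) (subsets_upto m') else [:: [::]].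

Lemma mem_map_cons (T : eqType) (a x : T) t (ts : seq (seq T)) :
  (x :: t \in map (cons a) ts) = (x == a) && (t \in ts).
Proof.
apply/mapP/andP => [[t' t'_in [-> ->]] | [/eqP -> t_in]]; first by rewrite eqxx.
by exists t.
Qed.

Lemma mem_subsets_upto m t :
  (t \in subsets_upto m) =
  [&& sorted gtn t, all (fun x => 0 < x)%N t & (head 0 t <= m)%N].
Proof.
elim: m t => [|m IH] [|x s] //=; first by rewrite inE; case: x => [|x]; rewrite ?andbF.
  by rewrite mem_cat IH.
rewrite mem_cat mem_map_cons !IH /=; case: s => [|y s] /=; first lia.
by case: (path _ y s); case: (all _ s); lia.
Qed.

Lemma uniq_subsets_upto m : uniq (subsets_upto m).
Proof.
elim: m => //= m IH; rewrite cat_uniq IH map_inj_uniq //=; last by move=> a b [].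
rewrite IH andbT; apply/hasPn => t /mapP [t' _ ->]; rewrite mem_subsets_upto /=; lia.
Qed.

Lemma size_subsets_upto m t : t \in subsets_upto m -> (size t <= m)%N.
Proof.
elim: m t => [|m IH] t /=; first by rewrite inE => /eqP ->.
rewrite mem_cat => /orP [/IH t_le | /mapP [t' /IH t'_le ->]] /=.
  exact: leqW.
by rewrite ltnS.
Qed.

Lemma path_gtnE x t : (0 < x)%N -> path gtn x t = (head 0 t < x)%N && sorted gtn t.
Proof. by case: t => [|y t] //= ->. Qed.

Lemma perm_U_subsets_upto k j :
  perm_eq (U k.+1 j.+1) [seq j.+1 :: t | t <- subsets_upto j & size t == k].
Proof.
apply: uniq_perm.
- by rewrite filter_uniq ?uniq_tuple_seqs.
- by rewrite map_inj_uniq ?filter_uniq ?uniq_subsets_upto // => a b [].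
case=> [|x t]; rewrite mem_filter mem_tuple_seqs.
  by rewrite andbF; apply/esym/mapP => -[].
rewrite mem_map_cons mem_filter mem_subsets_upto /=.
case: (eqVneq x j.+1) => [-> | x_neq]; last by rewrite !andbF.
rewrite eqSS leqnn /=; apply/idP/idP.
  case/and3P => /and3P [t_pos t_path _] -> _.
  by move: t_path; rewrite path_gtnE // ltnS t_pos => /andP [-> ->].
case/and4P => size_t t_sorted t_pos head_t.
have t_path : path gtn j.+1 t by rewrite path_gtnE // ltnS head_t.
rewrite t_pos t_path size_t /=.
by apply: sub_all (order_path_min (rev_trans ltn_trans) t_path) => y /ltnW.
Qed.

Lemma sum_fibers_nat (R : nmodType) (T : eqType) (ts : seq T) (f : T -> nat) k
    (G : nat -> T -> R) :
  {in ts, forall t, f t < k}%N ->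
  \sum_(0 <= s < k) \sum_(t <- ts | f t == s) G s t = \sum_(t <- ts) G (f t) t.
Proof.
move=> f_lt; rewrite (exchange_big_dep predT) //= big_seq_cond [RHS]big_seq_cond.
apply: eq_bigr => t /andP [t_in _]; rewrite -big_filter.
rewrite (@eq_filter _ _ (pred1 (f t))) => [|s]; last by rewrite /= eq_sym.
by rewrite filter_pred1_uniq ?iota_uniq ?big_seq1 // mem_index_iota f_lt.
Qed.

Lemma npart_ge_alternating_sum m N :
  (npart_ge N m.+1)%:Z =
  \sum_(t <- subsets_upto m) (-1) ^+ size t * (npart (N - (sumn t)%:Z))%:Z.
Proof.
elim: m N => [|m IH] N; first by rewrite big_seq1 expr0 mul1r subr0 npart_ge1.
rewrite -[LHS](addrK (npart_ge (N - m.+1%:Z) m.+1)%:Z) -PoszD -npart_ge_rec // !IH.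
rewrite /= big_cat big_map -sumrN; congr (_ + _); apply: eq_bigr => t _.
by rewrite exprS mulN1r mulNr PoszD opprD addrA.
Qed.

Theorem mainTheorem4 (n i : nat) (hn : (1 <= n)%N) (hi : (1 <= i)%N) :
  (size [seq l <- partitions_of n | smallest_part l == i])%:Z =
  \sum_(1 <= s < i.+1)
     (-1) ^+ s.-1 * \sum_(pi <- U s i) (npart (n%:Z - (sumn pi)%:Z))%:Z.
Proof.
rewrite (eq_in_filter (a2 := fun l => all (leq i) l && (i \in l))); last first.
  by move=> l; rewrite mem_partitions_of; apply: smallest_partE.
case: i hi => // j _; rewrite npart_ge_smallest // npart_ge_alternating_sum big_add1 /=.
rewrite -(sum_fibers_nat (k := j.+1)
  (fun s t => (-1) ^+ s * (npart (n%:Z - j.+1%:Z - (sumn t)%:Z))%:Z)); last first.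
  by move=> t /size_subsets_upto.
apply: eq_bigr => s _; rewrite (perm_big _ (perm_U_subsets_upto s j)) big_map big_filter.
rewrite big_distrr; apply: eq_bigr => t /eqP <- /=.
by rewrite PoszD opprD addrA.
Qed.
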